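(* Fix a coordinate $i$ and run the COCOB algorithm (defined in the context) on an arbitrary sequence of outcomes with $|g_{t,i}|\le L_i$ for all $t$. Define the wealth $\mathrm{Wealth}_{t,i}=L_i+\mathrm{Reward}_{t,i}$. Then for every $t\ge0$: (a) $\mathrm{Wealth}_{t,i}>0$, and $|\beta_{t,i}g_{t+1,i}|<1$; (b) $\mathrm{Wealth}_{t,i}\ \ge\ L_i\exp\left(\frac{\theta_{t,i}^2}{2L_i(G_{t,i}+L_i)}-\sum_{j=1}^{t}\frac{|g_{j,i}|}{2(L_i+G_{j-1,i})}\right)\ \ge\ L_i\exp\left(\frac{\theta_{t,i}^2}{2L_i(G_{t,i}+L_i)}-\frac12\ln\frac{G_{t,i}}{L_i}\right)$.
   Context: COCOB algorithm (COntinuous COin Betting). Input: constants $L_i>0$ for $i=1,\dots,d$, an initial point $\boldsymbol{w}_1\in\mathbb{R}^d$, and a number of rounds $T$. Initialize $G_{0,i}=L_i$, $\mathrm{Reward}_{0,i}=0$ and $\theta_{0,i}=0$ for every $i$. For $t=1,\dots,T$: a vector $\boldsymbol{g}_t\in\mathbb{R}^d$ is received at the current point $\boldsymbol{w}_t$; it may depend arbitrarily on $\boldsymbol{w}_1,\dots,\boldsymbol{w}_t$. Then for each $i=1,\dots,d$: - $G_{t,i}=G_{t-1,i}+|g_{t,i}|$; - $\mathrm{Reward}_{t,i}=\mathrm{Reward}_{t-1,i}+(w_{t,i}-w_{1,i})g_{t,i}$; - $\theta_{t,i}=\theta_{t-1,i}+g_{t,i}$; - $\beta_{t,i}=\frac{1}{L_i}\left(2\sigma\left(\frac{2\theta_{t,i}}{G_{t,i}+L_i}\right)-1\right)$,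 where $\sigma(x)=\frac{1}{1+e^{-x}}$; - $w_{t+1,i}=w_{1,i}+\beta_{t,i}(L_i+\mathrm{Reward}_{t,i})$. In particular $w_{t+1,i}-w_{1,i}=\beta_{t,i}\mathrm{Wealth}_{t,i}$, so that $\mathrm{Wealth}_{t+1,i}=\mathrm{Wealth}_{t,i}(1+\beta_{t,i}g_{t+1,i})$. *)

From Stdlib Require Import Reals Lra.
Open Scope R_scope.

Definition sigmoid (x : R) : R := 1 / (1 + exp (- x)).

(* Per-coordinate COCOB.  Everything below is for one coordinate i, with
   Li = L_i, w1i = w_{1,i} and gi t = g_{t,i} (t >= 1; gi 0 is never used).
   The coordinates of COCOB evolve independently. *)

Definition cocob_beta (Li G theta : R) : R :=
  (1 / Li) * (2 * sigmoid (2 * theta / (G + Li)) - 1).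

(* state at time t: (G_{t,i}, Reward_{t,i}, theta_{t,i}) *)
Fixpoint cocob_state (Li w1i : R) (gi : nat -> R) (t : nat) : R * R * R :=
  match t with
  | O => (Li, 0, 0)
  | S t' =>
      let '(G, Rw, th) := cocob_state Li w1i gi t' in
      (* w_{t,i} with t = t'+1 : w_1 = w1i, and for t' >= 1
         w_{t'+1} = w1 + beta_{t'} (Li + Reward_{t'}) *)
      let wt := match t' with
                | O => w1i
                | S _ => w1i + cocob_beta Li G th * (Li + Rw)
                end in
      (G + Rabs (gi t), Rw + (wt - w1i) * gi t, th + gi t)
  end.

Definition cocob_G (Li w1i : R) (gi : nat -> R) (t : nat) : R :=
  fst (fst (cocob_state Li w1i gi t)).
Definition cocob_Reward (Li w1i : R) (gi : nat -> R) (t : nat) : R :=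
  snd (fst (cocob_state Li w1i gi t)).
Definition cocob_theta (Li w1i : R) (gi : nat -> R) (t : nat) : R :=
  snd (cocob_state Li w1i gi t).

(* beta_{t,i} (the formula evaluated at time t; for t = 0 it gives 0) *)
Definition cocob_beta_t (Li w1i : R) (gi : nat -> R) (t : nat) : R :=
  cocob_beta Li (cocob_G Li w1i gi t) (cocob_theta Li w1i gi t).

Definition cocob_Wealth (Li w1i : R) (gi : nat -> R) (t : nat) : R :=
  Li + cocob_Reward Li w1i gi t.

Fixpoint sum_1_to (f : nat -> R) (t : nat) : R :=
  match t with
  | O => 0
  | S t' => sum_1_to f t' + f (S t')
  end.

(** Since 2 sigmoid (2 y) - 1 = tanh y, one round multiplies the wealth by
    1 + tanh (theta / (G + L)) g / L.  For g >= 0 (the other sign follows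
    since tanh is odd) write u = g / L: concavity of ln gives
    ln (1 + u (z - 1)) >= u ln z, and ln (1 + tanh y) = y - ln cosh y
    >= y - y^2/2 because cosh y <= exp (y^2/2); the remaining gap between
    u (y - y^2/2) and the increment of the potential is an explicit sum of
    nonnegative terms.  The penalty sum telescopes against (1/2) ln (G_t / L) because
    ln (G + x) - ln G >= x / (G + x) and L + G >= G + x. *)

From Stdlib Require Import Reals Lra Lia Psatz.
From Coquelicot Require Import Coquelicot.
Open Scope R_scope.

Lemma exp_le_compat x y : x <= y -> exp x <= exp y.
Proof. intros [H|H]; [now left; apply exp_increasing | rewrite H; lra]. Qed.

Lemma continuity_pt_of_is_derive (f : R -> R) x l :
  is_derive f x l -> continuity_pt f x.
Proof.
  intros Hf. apply continuity_pt_filterlim.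
  apply (ex_derive_continuous (V := R_CompleteNormedModule)). now exists l.
Qed.

Lemma nondecreasing_of_derive_nonneg (f df : R -> R) x y :
  (forall z, is_derive f z (df z)) -> (forall z, x <= z <= y -> 0 <= df z) ->
  x <= y -> f x <= f y.
Proof.
  intros Hf Hdf Hxy.
  destruct (MVT_gen f x y df) as [c [Hc Hmvt]].
  - intros z _; apply Hf.
  - intros z _; apply (continuity_pt_of_is_derive f z (df z)), Hf.
  - rewrite Rmin_left, Rmax_right in Hc by lra.
    specialize (Hdf c Hc). nra.
Qed.

Lemma ge_at_0_of_derive_sign (f df : R -> R) y :
  (forall z, is_derive f z (df z)) ->
  (forall z, 0 <= z -> 0 <= df z) -> (forall z, z <= 0 -> df z <= 0) ->
  f 0 <= f y.
Proof.
  intros Hf Hpos Hneg. destruct (Rle_dec 0 y).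
  - apply (nondecreasing_of_derive_nonneg f df); auto.
    intros z Hz; apply Hpos; lra.
  - apply Ropp_le_cancel.
    apply (nondecreasing_of_derive_nonneg (fun z => - f z) (fun z => - df z)).
    + intros z. apply (is_derive_opp f z (df z)), Hf.
    + intros z Hz. specialize (Hneg z ltac:(lra)). lra.
    + lra.
Qed.

Lemma cosh_pos y : 0 < cosh y.
Proof. unfold cosh. pose proof (exp_pos y); pose proof (exp_pos (- y)). lra. Qed.

Lemma tanh_eq y : tanh y = (exp y - exp (- y)) / (exp y + exp (- y)).
Proof.
  unfold tanh, sinh, cosh. pose proof (cosh_pos y). unfold cosh in *.
  field. lra.
Qed.

Lemma two_sigmoid_double_sub_1 y : 2 * sigmoid (2 * y) - 1 = tanh y.
Proof.
  rewrite tanh_eq. unfold sigmoid.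
  replace (- (2 * y)) with (- y + - y) by ring.
  rewrite exp_plus, !exp_Ropp.
  pose proof (exp_pos y).
  field. split; nra.
Qed.

Lemma tanh_bounds y : -1 < tanh y < 1.
Proof.
  rewrite tanh_eq. pose proof (exp_pos y); pose proof (exp_pos (- y)).
  split; [apply Rmult_lt_reg_r with (exp y + exp (- y))
         | apply Rmult_lt_reg_r with (exp y + exp (- y))];
    try lra; field_simplify; lra.
Qed.

Lemma tanh_opp y : tanh (- y) = - tanh y.
Proof. rewrite !tanh_eq, Ropp_involutive. pose proof (cosh_pos y). unfold cosh in *. field. lra. Qed.

Lemma one_add_tanh y : 1 + tanh y = exp y / cosh y.
Proof.
  rewrite tanh_eq. pose proof (cosh_pos y). unfold cosh in *.
  field. lra.
Qed.

Lemma is_derive_id_sub_tanh y : is_derive (fun z => z - tanh z) y (tanh y ^ 2).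
Proof.
  pose proof (exp_pos y); pose proof (exp_pos (- y)).
  unfold tanh, sinh, cosh. auto_derive; [lra | field; lra].
Qed.

Lemma is_derive_sqr_half_sub_ln_cosh y :
  is_derive (fun z => z ^ 2 / 2 - ln (cosh z)) y (y - tanh y).
Proof.
  pose proof (exp_pos y); pose proof (exp_pos (- y)).
  unfold tanh, sinh, cosh. auto_derive; [lra | field; lra].
Qed.

Lemma tanh_0 : tanh 0 = 0.
Proof. pose proof (tanh_opp 0) as H. rewrite Ropp_0 in H. lra. Qed.

Lemma tanh_le_id y : 0 <= y -> tanh y <= y.
Proof.
  intros Hy.
  pose proof (nondecreasing_of_derive_nonneg (fun z => z - tanh z) (fun z => tanh z ^ 2)
                0 y is_derive_id_sub_tanh (fun z _ => pow2_ge_0 (tanh z)) Hy) as Hm.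
  cbn beta in Hm. rewrite tanh_0 in Hm. lra.
Qed.

Lemma ln_cosh_le y : ln (cosh y) <= y ^ 2 / 2.
Proof.
  assert (Hk : 0 ^ 2 / 2 - ln (cosh 0) <= y ^ 2 / 2 - ln (cosh y)).
  { apply (ge_at_0_of_derive_sign (fun z => z ^ 2 / 2 - ln (cosh z)) (fun z => z - tanh z)).
    - exact is_derive_sqr_half_sub_ln_cosh.
    - intros z Hz. pose proof (tanh_le_id z Hz). lra.
    - intros z Hz. pose proof (tanh_le_id (- z) ltac:(lra)). rewrite tanh_opp in *. lra. }
  rewrite cosh_0, ln_1 in Hk. lra.
Qed.

Lemma ln_one_add_tanh_ge y : y - y ^ 2 / 2 <= ln (1 + tanh y).
Proof.
  rewrite one_add_tanh, ln_div, ln_exp by (apply exp_pos || apply cosh_pos).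
  pose proof (ln_cosh_le y). lra.
Qed.

Lemma exp_ge_tangent s t : exp s * (1 + (t - s)) <= exp t.
Proof.
  replace (exp t) with (exp s * exp (t - s)) by (rewrite <- exp_plus; f_equal; ring).
  apply Rmult_le_compat_l; [apply Rlt_le, exp_pos | apply exp_ineq1_le].
Qed.

Lemma exp_mul_le_chord u x : 0 <= u <= 1 -> exp (u * x) <= 1 - u + u * exp x.
Proof.
  intros Hu.
  pose proof (exp_ge_tangent (u * x) 0) as H0. rewrite exp_0 in H0.
  pose proof (exp_ge_tangent (u * x) x) as Hx.
  nra.
Qed.

Lemma mul_ln_le_ln_chord u z : 0 <= u <= 1 -> 0 < z -> u * ln z <= ln (1 + u * (z - 1)).
Proof.
  intros Hu Hz.
  pose proof (exp_mul_le_chord u (ln z) Hu) as Hchord. rewrite exp_ln in Hchord by lra.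
  rewrite <- (ln_exp (u * ln z)). apply ln_le; [apply exp_pos | lra].
Qed.

Lemma div_add_le_ln_ratio a x : 0 < a -> 0 <= x -> x / (a + x) <= ln ((a + x) / a).
Proof.
  intros Ha Hx.
  assert (Hr : 0 < (a + x) / a) by (apply Rdiv_lt_0_compat; lra).
  pose proof (exp_ineq1_le (- ln ((a + x) / a))) as Hexp.
  rewrite exp_Ropp, exp_ln in Hexp by exact Hr.
  replace (/ ((a + x) / a)) with (1 - x / (a + x)) in Hexp by (field; lra).
  lra.
Qed.

Lemma log_wealth_step_nonneg L G th g : 0 < L -> 0 < G -> 0 <= g <= L ->
  (th + g) ^ 2 / (2 * L * (G + g)) - th ^ 2 / (2 * L * G) - g / (2 * (L + G))
  <= ln (1 + tanh (th / (G + L)) / L * g).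
Proof.
  intros HL HG Hg.
  set (y := th / (G + L)). set (u := g / L).
  assert (Hu : 0 <= u <= 1).
  { unfold u. split; [apply Rdiv_le_0_compat; lra | apply Rle_div_l; lra]. }
  pose proof (tanh_bounds y).
  pose proof (mul_ln_le_ln_chord u (1 + tanh y) Hu ltac:(lra)) as Hconc.
  replace (1 + u * (1 + tanh y - 1)) with (1 + tanh y / L * g) in Hconc
    by (unfold u; field; lra).
  assert (Hlin : u * (y - y ^ 2 / 2) <= u * ln (1 + tanh y)).
  { apply Rmult_le_compat_l; [lra | apply ln_one_add_tanh_ge]. }
  assert (Hgap : u * (y - y ^ 2 / 2)
                 - ((th + g) ^ 2 / (2 * L * (G + g)) - th ^ 2 / (2 * L * G) - g / (2 * (L + G)))
               = g * th ^ 2 / (2 * G * (G + L) ^ 2)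
                 + g * (L - g) * (th - G) ^ 2 / (2 * L * G * (G + L) * (G + g))).
  { unfold u, y. field. lra. }
  assert (0 <= g * th ^ 2 / (2 * G * (G + L) ^ 2)).
  { apply Rdiv_le_0_compat; [nra | apply Rmult_lt_0_compat; [lra | apply pow_lt; lra]]. }
  assert (0 <= g * (L - g) * (th - G) ^ 2 / (2 * L * G * (G + L) * (G + g))).
  { apply Rdiv_le_0_compat; [| repeat apply Rmult_lt_0_compat; lra].
    apply Rmult_le_pos; [nra | apply pow2_ge_0]. }
  lra.
Qed.

Lemma log_wealth_step L G th g : 0 < L -> 0 < G -> Rabs g <= L ->
  (th + g) ^ 2 / (2 * L * (G + Rabs g)) - th ^ 2 / (2 * L * G) - Rabs g / (2 * (L + G))
  <= ln (1 + tanh (th / (G + L)) / L * g).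
Proof.
  intros HL HG Hg. destruct (Rle_dec 0 g) as [Hpos | Hneg].
  - rewrite Rabs_right in * by lra. apply log_wealth_step_nonneg; lra.
  - rewrite Rabs_left in * by lra.
    pose proof (log_wealth_step_nonneg L G (- th) (- g) HL HG ltac:(lra)) as Hstep.
    replace (- th / (G + L)) with (- (th / (G + L))) in Hstep by (field; lra).
    rewrite tanh_opp in Hstep.
    replace ((th + g) ^ 2) with ((- th + - g) ^ 2) by ring.
    replace (th ^ 2) with ((- th) ^ 2) by ring.
    replace (tanh (th / (G + L)) / L * g) with (- tanh (th / (G + L)) / L * - g) by (field; lra).
    exact Hstep.
Qed.

Lemma cocob_beta_tanh L G th : 0 < L -> cocob_beta L G th = tanh (th / (G + L)) / L.
Proof.
  intros HL. unfold cocob_beta.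
  replace (2 * th / (G + L)) with (2 * (th / (G + L))) by (unfold Rdiv; ring).
  rewrite two_sigmoid_double_sub_1. field. lra.
Qed.

Section Cocob.

Variables (L w1 : R) (g : nat -> R).
Hypothesis L_pos : 0 < L.
Hypothesis g_bounded : forall t, (1 <= t)%nat -> Rabs (g t) <= L.

Notation G := (cocob_G L w1 g).
Notation theta := (cocob_theta L w1 g).
Notation Wealth := (cocob_Wealth L w1 g).
Notation beta := (cocob_beta_t L w1 g).

Definition cocob_penalty (t : nat) : R :=
  sum_1_to (fun j => Rabs (g j) / (2 * (L + G (j - 1)%nat))) t.

Lemma cocob_G_S t : G (S t) = G t + Rabs (g (S t)).
Proof.
  unfold cocob_G. cbn [cocob_state].
  now destruct (cocob_state L w1 g t) as [[G' Rw] th].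
Qed.

Lemma cocob_theta_S t : theta (S t) = theta t + g (S t).
Proof.
  unfold cocob_theta. cbn [cocob_state].
  now destruct (cocob_state L w1 g t) as [[G' Rw] th].
Qed.

(* At t = 0 the recursion plays w_1 itself; this agrees with the general
   formula because beta_0 = (2 sigmoid 0 - 1) / L = 0. *)
Lemma cocob_Wealth_S t : Wealth (S t) = Wealth t * (1 + beta t * g (S t)).
Proof.
  unfold cocob_Wealth, cocob_Reward, cocob_beta_t, cocob_G, cocob_theta.
  cbn [cocob_state].
  destruct (cocob_state L w1 g t) as [[G' Rw] th] eqn:Hstate. cbn.
  destruct t as [|t].
  - cbn in Hstate. injection Hstate as <- <- <-.
    rewrite cocob_beta_tanh, Rdiv_0_l, tanh_0 by exact L_pos. field. lra.
  - ring.
Qed.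

Lemma cocob_beta_t_tanh t : beta t = tanh (theta t / (G t + L)) / L.
Proof. apply cocob_beta_tanh, L_pos. Qed.

Lemma cocob_penalty_S t :
  cocob_penalty (S t) = cocob_penalty t + Rabs (g (S t)) / (2 * (L + G t)).
Proof. unfold cocob_penalty. cbn [sum_1_to]. now replace (S t - 1)%nat with t by lia. Qed.

Lemma cocob_G_ge t : L <= G t.
Proof.
  induction t as [|t IH]; [apply Rle_refl|].
  rewrite cocob_G_S. pose proof (Rabs_pos (g (S t))). lra.
Qed.

Lemma cocob_bet_lt_1 t : Rabs (beta t * g (S t)) < 1.
Proof.
  rewrite cocob_beta_t_tanh.
  set (b := tanh (theta t / (G t + L))).
  assert (Hb : Rabs b < 1) by (apply Rabs_def1; apply tanh_bounds).
  pose proof (g_bounded (S t) ltac:(lia)).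
  pose proof (Rabs_pos b); pose proof (Rabs_pos (g (S t))).
  replace (b / L * g (S t)) with (b * g (S t) / L) by (field; lra).
  rewrite Rabs_div, Rabs_mult, (Rabs_right L) by lra.
  apply Rlt_div_l; nra.
Qed.

Lemma cocob_Wealth_pos t : 0 < Wealth t.
Proof.
  induction t as [|t IH]; [unfold cocob_Wealth; cbn; lra|].
  rewrite cocob_Wealth_S. pose proof (cocob_bet_lt_1 t) as Hbet.
  apply Rabs_def2 in Hbet. apply Rmult_lt_0_compat; lra.
Qed.

Lemma cocob_log_wealth_ge t :
  theta t ^ 2 / (2 * L * G t) - cocob_penalty t <= ln (Wealth t / L).
Proof.
  induction t as [|t IH].
  - unfold cocob_Wealth, cocob_penalty, cocob_theta, cocob_G. cbn.
    replace ((L + 0) / L) with 1 by (field; lra).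
    rewrite ln_1. unfold Rdiv. rewrite Rmult_0_l, Rmult_0_l. lra.
  - pose proof (cocob_Wealth_pos t) as HW.
    pose proof (cocob_bet_lt_1 t) as Hbet. apply Rabs_def2 in Hbet.
    replace (Wealth (S t) / L) with (Wealth t / L * (1 + beta t * g (S t)))
      by (rewrite cocob_Wealth_S; field; lra).
    rewrite ln_mult by (try apply Rdiv_lt_0_compat; lra).
    pose proof (cocob_G_ge t) as HG.
    pose proof (log_wealth_step L (G t) (theta t) (g (S t)) L_pos ltac:(lra)
                  (g_bounded (S t) ltac:(lia))) as Hstep.
    rewrite <- cocob_beta_t_tanh in Hstep.
    rewrite cocob_penalty_S, cocob_G_S, cocob_theta_S.
    lra.
Qed.

Lemma cocob_penalty_le t : cocob_penalty t <= / 2 * ln (G t / L).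
Proof.
  induction t as [|t IH].
  - unfold cocob_penalty, cocob_G. cbn.
    replace (L / L) with 1 by (field; lra). rewrite ln_1. lra.
  - pose proof (cocob_G_ge t) as HG.
    pose proof (g_bounded (S t) ltac:(lia)). pose proof (Rabs_pos (g (S t))).
    rewrite cocob_penalty_S, cocob_G_S.
    set (a := G t) in *. set (x := Rabs (g (S t))) in *.
    replace ((a + x) / L) with (a / L * ((a + x) / a)) by (field; lra).
    rewrite ln_mult by (apply Rdiv_lt_0_compat; lra).
    pose proof (div_add_le_ln_ratio a x ltac:(lra) ltac:(lra)) as Hln.
    assert (x / (2 * (L + a)) <= x / (2 * (a + x))).
    { unfold Rdiv. apply Rmult_le_compat_l; [lra|].
      apply Rinv_le_contravar; lra. }
    replace (x / (2 * (a + x))) with (/ 2 * (x / (a + x))) in * by (field; lra).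
    lra.
Qed.

End Cocob.

Theorem mainTheorem3
  (d : nat) (L : nat -> R) (w1 : nat -> R) (g : nat -> nat -> R) (i : nat)
  (hL : forall k, (k < d)%nat -> 0 < L k)
  (hi : (i < d)%nat)
  (hg : forall t, (1 <= t)%nat -> Rabs (g t i) <= L i) :
  let gi := fun t => g t i in
  let G := cocob_G (L i) (w1 i) gi in
  let theta := cocob_theta (L i) (w1 i) gi in
  let beta := cocob_beta_t (L i) (w1 i) gi in
  let W := cocob_Wealth (L i) (w1 i) gi in
  forall t : nat,
    (0 < W t /\ Rabs (beta t * gi (S t)) < 1) /\
    (W t >= L i * exp (theta t ^ 2 / (2 * L i * (G t + L i))
                       - sum_1_to (fun j => Rabs (gi j) / (2 * (L i + G (j - 1)%nat))) t)
     /\ L i * exp (theta t ^ 2 / (2 * L i * (G t + L i))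
                   - sum_1_to (fun j => Rabs (gi j) / (2 * (L i + G (j - 1)%nat))) t)
        >= L i * exp (theta t ^ 2 / (2 * L i * (G t + L i))
                      - / 2 * ln (G t / L i))).
Proof.
  intros gi G theta beta W t.
  pose proof (hL i hi) as HL.
  assert (HW : 0 < W t) by now apply cocob_Wealth_pos.
  assert (HG : L i <= G t) by apply cocob_G_ge.
  change (sum_1_to _ t) with (cocob_penalty (L i) (w1 i) gi t).
  split; [split; [exact HW | exact (cocob_bet_lt_1 (L i) (w1 i) gi HL hg t)] | split; apply Rle_ge].
  - assert (Hden : theta t ^ 2 / (2 * L i * (G t + L i)) <= theta t ^ 2 / (2 * L i * G t)).
    { unfold Rdiv. apply Rmult_le_compat_l; [apply pow2_ge_0|].
      apply Rinv_le_contravar; nra. }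
    assert (Hlog : theta t ^ 2 / (2 * L i * G t) - cocob_penalty (L i) (w1 i) gi t
                   <= ln (W t / L i)) by now apply cocob_log_wealth_ge.
    replace (W t) with (L i * exp (ln (W t / L i)))
      by (rewrite exp_ln by (apply Rdiv_lt_0_compat; lra); field; lra).
    apply Rmult_le_compat_l; [lra|]. apply exp_le_compat. lra.
  - apply Rmult_le_compat_l; [lra|]. apply exp_le_compat.
    assert (cocob_penalty (L i) (w1 i) gi t <= / 2 * ln (G t / L i))
      by now apply cocob_penalty_le.
    lra.
Qed.
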